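(* Let $\alpha>0$. The parallel algorithm ParPolyPA (described in the context) samples each host $h$ with probability $\deg(h)^\alpha/W$, i.e., for every index $i$, the host of the $i$-th sample equals node $h$ with probability $\deg_i(h)^\alpha/W_i$, where $\deg_i$ and $W_i$ refer to the graph on which sample $i$ is to be drawn (the graph containing all earlier samples).
   Context: Polynomial preferential attachment: start from a seed graph $G_0$ with $n_0$ nodes; new nodes arrive one at a time, each attached to one earlier node (host) chosen with probability proportional to $\deg(h)^\alpha$. For a sample index $i$, let $\deg_i(v)$, $W_i=\sum_v\deg_i(v)^\alpha$, $n_i$ and $\Delta_i$ (maximum degree) refer to the graph on which the $i$-th host is to be drawn. Proposal lists: the algorithm stores a list $P$ of nodes with multiplicities $c(v)$, and $w(v)=\deg(v)^\alpha/c(v)$, maintained as follows: initially each seed node $v$ appears $\lceil\deg_0(v)^\alpha n_0/W_0\rceil$ times; a host is drawn from a distribution by choosing a uniform random position of (the relevant part of) $P$ and accepting via rejection sampling; after adding a new node it is appended once and its host $h$ is appended while $w(h)$ exceeds the current value $W/n$. ParPolyPA processes the samples in batches. Let $s$ be the index of the first sample of a batch, and define $W_i'=W_s+2(i-s)$ if $\alpha\le 1$ and $W_i'=W_s+2\big((\Delta_s+i-s)^\alpha-\Delta_s^\alpha\big)$ if $\alpha>1$. Phase 1: indices $i=s,s+1,\dots$ are processed by the processors; for index $i$ a coin with heads probability $W_s/W_i'$ is flipped; on heads, the host of sample $i$ is drawn from $P_1(h)=\deg_s(h)^\alpha/W_s$ (rejection sampling from the proposal list as it was at the start of the batch); on tails,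 a shared variable $l$ is set to $\min\{l,i\}$ (initially $l=N+1$) and processing of indices $\ge l$ stops. Phase 2: all samples with index $<l$ are added to the graph and the proposal list is updated. Phase 3: for sample $l$ (if any), with probability $(W_l-W_s)/(W_l'-W_s)$ the host is drawn from $P_2(h)=(\deg_l(h)^\alpha-\deg_s(h)^\alpha)/(W_l-W_s)$, and otherwise from $P_3(h)=\deg_l(h)^\alpha/W_l$; the node and edge are added and the proposal list updated. Then the next batch starts with $s\gets l$. *)

From mathcomp Require Import all_boot all_order all_algebra.
From mathcomp Require Import reals exp.
Set Implicit Arguments.
Unset Strict Implicit.
Unset Printing Implicit Defensive.
Import Order.TTheory GRing.Theory Num.Theory.
Local Open Scope ring_scope.

Section Dist.
Variable R : realType.

Definition dist (T : Type) := seq (R * T).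
Definition dret (T : Type) (x : T) : dist T := [:: (1, x)].
Definition dbind (T U : Type) (d : dist T) (f : T -> dist U) : dist U :=
  flatten [seq [seq (p.1 * q.1, q.2) | q <- f p.2] | p <- d].
Definition dcoin (p : R) : dist bool := [:: (p, true); (1 - p, false)].
Definition prob (T : Type) (d : dist T) (E : pred T) : R :=
  \sum_(p <- d) p.1 * (E p.2)%:R.
Definition ddraw (n : nat) (w : nat -> R) (tot : R) : dist nat :=
  [seq (w v / tot, v) | v <- iota 0 n].
End Dist.
Arguments dret {R T}.
Arguments dbind {R T U}.
Arguments dcoin {R}.

(* Nodes are natural numbers; the seed graph G_0 has nodes 0..n0-1 and  *)
(* seed degrees d0 (d0 v = 0 for v >= n0).  A history [hs] is the list  *)
(* of hosts of samples 1..size hs; sample j adds node n0 + j - 1,       *)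
(* attached to host hs_(j-1).                                           *)

Definition seed_deg (n0 : nat) (e : rel 'I_n0) (v : nat) : nat :=
  #|[set u : 'I_n0 | [exists x : 'I_n0, (val x == v) && e x u]]|.

Section PolyPA.
Variable R : realType.
Variable alpha : R.
Variable n0 : nat.
Variable d0 : nat -> nat.
Variable N : nat. (* total number of samples *)

Definition nnodes (hs : seq nat) : nat := n0 + size hs.
Definition deg (hs : seq nat) (v : nat) : nat :=
  d0 v + (n0 <= v < nnodes hs)%N + count (pred1 v) hs.
Definition wt (hs : seq nat) (v : nat) : R := (deg hs v)%:R `^ alpha.
Definition Wt (hs : seq nat) : R := \sum_(v <- iota 0 (nnodes hs)) wt hs v.
Definition maxdeg (hs : seq nat) : nat := \max_(v <- iota 0 (nnodes hs)) deg hs v.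

(* W'_i for a batch starting from history hs (so s = size hs + 1),
   with t = i - s *)
Definition Wbound (hs : seq nat) (t : nat) : R :=
  if alpha <= 1 then Wt hs + 2 * t%:R
  else Wt hs + 2 * (((maxdeg hs + t)%:R `^ alpha) - ((maxdeg hs)%:R `^ alpha)).

Definition P1 (hs : seq nat) : dist R nat := ddraw (nnodes hs) (wt hs) (Wt hs).
Definition P2 (hs hs' : seq nat) : dist R nat :=
  ddraw (nnodes hs') (fun v => wt hs' v - wt hs v) (Wt hs' - Wt hs).
Definition P3 (hs' : seq nat) : dist R nat := ddraw (nnodes hs') (wt hs') (Wt hs').

(* Phase 1 of a batch starting from history hs, processing offsets
   t, t+1, ..., t+m-1 (indices i = s+t, ...).  Returns the hosts of the
   heads samples (indices < l) and whether a tails occurred (l <= N);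
   in that case l = s + (number of heads samples). *)
Fixpoint phase1 (hs : seq nat) (m t : nat) : dist R (seq nat * bool) :=
  match m with
  | 0 => dret ([::], false)
  | m'.+1 =>
      dbind (dcoin (Wt hs / Wbound hs t)) (fun b =>
        if b then
          dbind (P1 hs) (fun h =>
          dbind (phase1 hs m' t.+1) (fun r => dret (h :: r.1, r.2)))
        else dret ([::], true))
  end.

Definition batch (hs : seq nat) : dist R (seq nat) :=
  dbind (phase1 hs (N - size hs) 0) (fun r =>
    let hs' := hs ++ r.1 in           (* Phase 2: samples with index < l *)
    if r.2 then                        (* Phase 3: sample l *)
      let t := size r.1 in             (* t = l - s *)
      dbind (dcoin ((Wt hs' - Wt hs) / (Wbound hs t - Wt hs))) (fun b =>
        dbind (if b then P2 hs hs' else P3 hs') (fun h => dret (rcons hs' h)))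
    else dret hs').

(* Repeated batches (each batch adds at least one sample, so N rounds
   of fuel suffice). *)
Fixpoint run (fuel : nat) (hs : seq nat) : dist R (seq nat) :=
  match fuel with
  | 0 => dret hs
  | f.+1 => if (N <= size hs)%N then dret hs else dbind (batch hs) (run f)
  end.

Definition ParPolyPA : dist R (seq nat) := run N [::].

End PolyPA.

(* ParPolyPA and sequential polynomial preferential attachment induce the same
   law on host sequences, and for the sequential process the conditional law of
   the i-th host is deg_i(h)^alpha / W_i by construction.  Call G harmonic if
   G x is the average of G (rcons x v) under P_3(x) = deg_x(v)^alpha / W_x.  One
   batch preserves the expectation of every harmonic G: when Phase 1 reaches
   offset t with current history x, the next host is v with probability
     (W_s/W'_t) P_1(v) + (1 - W_s/W'_t) (q P_2(v) + (1 - q) P_3(v)),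
     q = (W_x - W_s) / (W'_t - W_s),
   which simplifies to P_3(v) (batch_mixture).  This is a field identity: only
   W_s < W_x and W_s < W'_t are needed, never that q is a probability.  Taking
   G x = E[g after the remaining sequential steps from x] shows that the
   batches reproduce the sequential distribution. *)

From mathcomp Require Import all_boot all_order all_algebra.
From mathcomp Require Import reals exp.
From mathcomp Require Import ring zify.
Set Implicit Arguments.
Unset Strict Implicit.
Unset Printing Implicit Defensive.
Import Order.TTheory GRing.Theory Num.Theory.
Local Open Scope ring_scope.

Section Distributions.
Variable R : realType.

Definition expect (T : Type) (d : dist R T) (g : T -> R) : R :=
  \sum_(p <- d) p.1 * g p.2.

Lemma probE (T : Type) (d : dist R T) (E : pred T) :
  prob d E = expect d (fun x => (E x)%:R).
Proof. by []. Qed.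

Lemma eq_expect (T : Type) (d : dist R T) (g g' : T -> R) :
  g =1 g' -> expect d g = expect d g'.
Proof. by move=> eq_g; apply: eq_bigr => p _; rewrite eq_g. Qed.

Lemma expectMl (T : Type) (d : dist R T) (c : R) (g : T -> R) :
  expect d (fun x => c * g x) = c * expect d g.
Proof. by rewrite /expect mulr_sumr; apply: eq_bigr => p _; rewrite mulrCA. Qed.

Lemma expect_dret (T : Type) (x : T) g : expect (dret x) g = g x.
Proof. by rewrite /expect big_seq1 mul1r. Qed.

Lemma expect_dbind (T U : Type) (d : dist R T) (f : T -> dist R U) g :
  expect (dbind d f) g = expect d (fun x => expect (f x) g).
Proof.
rewrite /expect big_flatten big_map; apply: eq_bigr => p _.
by rewrite big_map mulr_sumr; apply: eq_bigr => q _; rewrite mulrA.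
Qed.

Lemma expect_dcoin (p : R) g :
  expect (dcoin p) g = p * g true + (1 - p) * g false.
Proof. by rewrite /expect big_cons big_seq1. Qed.

Lemma expect_ddraw n (w : nat -> R) (tot : R) g :
  expect (ddraw n w tot) g = \sum_(v <- iota 0 n) w v / tot * g v.
Proof. by rewrite /expect big_map. Qed.

Lemma prob_ddraw1 n (w : nat -> R) (tot : R) h :
  prob (ddraw n w tot) (pred1 h) = if (h < n)%N then w h / tot else 0.
Proof.
rewrite probE expect_ddraw.
under eq_bigr => v _ do rewrite mulr_natr mulrb.
case: ifPn => [h_lt|h_ge].
  rewrite (bigD1_seq h _ (iota_uniq _ _)) ?mem_iota //= eqxx big1 ?addr0 //.
  by move=> v /negbTE ->.
rewrite big1_seq // => v /andP [_]; rewrite mem_iota /=.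
by case: eqVneq => [->|//]; rewrite add0n (negbTE h_ge).
Qed.

Definition supported (T : eqType) (P : T -> Prop) (d : dist R T) :=
  forall p, p \in d -> P p.2.

Lemma eq_expect_supported (T : eqType) (d : dist R T) (g g' : T -> R) :
  supported (fun x => g x = g' x) d -> expect d g = expect d g'.
Proof. by move=> eq_g; apply: eq_big_seq => p /eq_g ->. Qed.

Lemma sub_supported (T : eqType) (P Q : T -> Prop) (d : dist R T) :
  (forall x, P x -> Q x) -> supported P d -> supported Q d.
Proof. by move=> PQ Pd p /Pd /PQ. Qed.

Lemma supported_dret (T : eqType) (P : T -> Prop) x :
  P x -> supported P (dret x).
Proof. by move=> Px p; rewrite inE => /eqP ->. Qed.

Lemma supported_dbind (T U : eqType) (Q : T -> Prop) (P : U -> Prop) d f :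
  supported Q d -> (forall x, Q x -> supported P (f x)) ->
  supported P (dbind d f).
Proof.
move=> Qd Pf p /flattenP [s /mapP [q q_d ->]] /mapP [r r_f ->].
exact: Pf _ (Qd _ q_d) r r_f.
Qed.

Lemma supported_dcoin (P : bool -> Prop) (p : R) :
  P true -> P false -> supported P (dcoin p).
Proof. by move=> Pt Pf q; rewrite !inE => /orP [] /eqP ->. Qed.

Lemma supported_ddraw n (w : nat -> R) (tot : R) :
  supported (fun v => (v < n)%N) (ddraw n w tot).
Proof. by move=> p /mapP [v]; rewrite mem_iota => /andP [_ v_lt] ->. Qed.

Lemma prob_gt0P (T : eqType) (d : dist R T) (E : pred T) :
  0 < prob d E -> exists2 p, p \in d & E p.2.
Proof.
move=> pos; apply/hasP; apply: contraTT pos => /hasPn noE.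
rewrite /prob big1_seq ?ltxx // => p /andP [_ /noE /negbTE ->].
by rewrite mulr0.
Qed.

End Distributions.

Lemma batch_mixture (F : fieldType) (Ws Wx Wb ws wx : F) :
  Ws != 0 -> Wx != 0 -> Wb != 0 -> Wb != Ws -> Wx != Ws ->
  let q := (Wx - Ws) / (Wb - Ws) in
  Ws / Wb * (ws / Ws)
  + (1 - Ws / Wb) * (q * ((wx - ws) / (Wx - Ws)) + (1 - q) * (wx / Wx))
  = wx / Wx.
Proof.
move=> Ws0 Wx0 Wb0; rewrite -subr_eq0 => WbWs; rewrite -subr_eq0 => WxWs q.
by rewrite /q; field; rewrite Ws0 Wx0 Wb0 WbWs WxWs.
Qed.

Section Histories.
Variables (n0 : nat) (d0 : nat -> nat).

(* The host of sample j.+1 is one of the n0 + j nodes present when it is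
   drawn. *)
Definition valid_hist (x : seq nat) :=
  forall j, (j < size x)%N -> (nth 0%N x j < n0 + j)%N.

Lemma valid_hist_cat x r :
  valid_hist x -> all (fun v => v < nnodes n0 x)%N r -> valid_hist (x ++ r).
Proof.
move=> x_valid /allP r_old j; rewrite size_cat nth_cat => j_lt.
case: (ltnP j (size x)) => j_x; first exact: x_valid.
have : (nth 0%N r (j - size x) < nnodes n0 x)%N.
  by apply/r_old/mem_nth; rewrite -(ltn_add2l (size x)) subnKC.
by move/leq_trans; apply; rewrite leq_add2l.
Qed.

Lemma valid_hist_take k x : valid_hist x -> valid_hist (take k x).
Proof.
move=> x_valid j; rewrite size_take => j_lt.
by rewrite nth_take; [apply: x_valid | ]; move: j_lt; case: ifP; lia.
Qed.

Lemma deg_le_cat x r v : (deg n0 d0 x v <= deg n0 d0 (x ++ r) v)%N.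
Proof. by rewrite /deg /nnodes count_cat size_cat; lia. Qed.

End Histories.

Section PolyPA.
Variables (R : realType) (alpha : R) (n0 : nat) (d0 : nat -> nat) (N : nat).

Local Notation nn := (nnodes n0).
Local Notation deg := (deg n0 d0).
Local Notation w := (wt alpha n0 d0).
Local Notation W := (Wt alpha n0 d0).
Local Notation Wb := (Wbound alpha n0 d0).
Local Notation P1 := (P1 alpha n0 d0).
Local Notation P2 := (P2 alpha n0 d0).
Local Notation P3 := (P3 alpha n0 d0).
Local Notation batch := (batch alpha n0 d0 N).
Local Notation run := (run alpha n0 d0 N).
Local Notation valid_hist := (valid_hist n0).

Lemma wt_ge0 x v : 0 <= w x v.
Proof. exact: powR_ge0. Qed.

Lemma wt_gt0 x v : (0 < deg x v)%N -> 0 < w x v.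
Proof. by move=> deg_gt0; apply: powR_gt0; rewrite ltr0n. Qed.

Lemma Wbound0 x : Wb x 0 = W x.
Proof. by rewrite /Wbound; case: ifP; rewrite ?addn0 ?subrr mulr0 addr0. Qed.

Fixpoint seqPolyPA (n : nat) (x : seq nat) : dist R (seq nat) :=
  if n is n'.+1 then dbind (P3 x) (fun v => seqPolyPA n' (rcons x v))
  else dret x.

Definition harmonic (G : seq nat -> R) :=
  forall x, (size x < N)%N -> G x = expect (P3 x) (fun v => G (rcons x v)).

Lemma seqPolyPA_harmonic g :
  harmonic (fun x => expect (seqPolyPA (N - size x) x) g).
Proof.
move=> x x_lt; rewrite -(subnSK x_lt) /= expect_dbind.
by apply: eq_expect => v; rewrite size_rcons.
Qed.

Definition phase3 (hs r : seq nat) : dist R (seq nat) :=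
  let x := hs ++ r in
  dbind (dcoin ((W x - W hs) / (Wb hs (size r) - W hs))) (fun b =>
    dbind (if b then P2 hs x else P3 x) (fun h => dret (rcons x h))).

Definition batch_end (hs r : seq nat) (tails : bool) : dist R (seq nat) :=
  if tails then phase3 hs r else dret (hs ++ r).

Lemma batchE hs :
  batch hs = dbind (phase1 alpha n0 d0 hs (N - size hs) 0)
                   (fun rb => batch_end hs rb.1 rb.2).
Proof. by []. Qed.

Lemma phase1_supported hs m t :
  supported (fun rb => all (fun v => v < nn hs)%N rb.1 /\
                       (if rb.2 then size rb.1 < m else size rb.1 == m)%N)
            (phase1 alpha n0 d0 hs m t).
Proof.
elim: m t => [|m IH] t /=; first exact: supported_dret.
apply: (supported_dbind (Q := fun=> True)) => [|[] _].
  exact: supported_dcoin.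
  apply: (supported_dbind (Q := fun v => v < nn hs)%N) => [|v v_lt].
    exact: supported_ddraw.
  apply: supported_dbind (IH t.+1) _ => -[r tails] /= [r_old r_size].
  by apply: supported_dret; rewrite /= v_lt r_old; case: tails r_size.
exact: supported_dret.
Qed.

Lemma batch_supported hs : valid_hist hs -> (size hs < N)%N ->
  supported (fun x : seq nat => valid_hist x /\ (size hs < size x <= N)%N)
            (batch hs).
Proof.
move=> hs_valid hs_lt; rewrite batchE.
eapply supported_dbind; first exact: phase1_supported.
move=> -[r tails] /= [r_old r_size].
have x_valid := valid_hist_cat hs_valid r_old.
case: tails r_size => /= r_size; last first.
  by apply: supported_dret; rewrite size_cat (eqP r_size); split => //; lia.
apply: (supported_dbind (Q := fun=> True)) => [|b _].
  exact: supported_dcoin.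
apply: (supported_dbind (Q := fun v => v < nn (hs ++ r))%N) => [|v v_lt].
  by case: b; apply: supported_ddraw.
apply: supported_dret; rewrite -cats1 size_cat size_cat /=; split; last by lia.
by apply: valid_hist_cat; rewrite //= v_lt.
Qed.

Lemma run_supported f hs : valid_hist hs -> supported valid_hist (run f hs).
Proof.
elim: f hs => [|f IH] hs hs_valid /=; first exact: supported_dret.
case: leqP => [_|hs_lt]; first exact: supported_dret.
by apply: supported_dbind (batch_supported hs_valid hs_lt) _ => x [/IH].
Qed.

Hypothesis alpha_gt0 : 0 < alpha.

Lemma wt_le_cat x r v : w x v <= w (x ++ r) v.
Proof.
by rewrite ge0_ler_powR ?nnegrE ?ler0n ?ler_nat ?deg_le_cat // ltW.
Qed.

Lemma Wt_lt_cat x r : r != [::] -> W x < W (x ++ r).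
Proof.
case: r => [//|a r] _.
rewrite /Wt {2}/nnodes size_cat addnA iotaD big_cat /= big_cons add0n.
rewrite -[ltLHS]addr0 ler_ltD ?ler_sum // => [v _|]; first exact: wt_le_cat.
rewrite ltr_pwDl ?sumr_ge0 // => [|v _]; last exact: wt_ge0.
by apply: wt_gt0; rewrite /deg /nnodes size_cat /=; lia.
Qed.

Lemma Wt_lt_Wbound x t : (0 < t)%N -> W x < Wb x t.
Proof.
move=> t_gt0; rewrite /Wbound; case: ifP => _; rewrite ltrDl pmulr_rgt0 //.
  by rewrite ltr0n.
by rewrite subr_gt0 gt0_ltr_powR ?nnegrE ?ler0n // ltr_nat; lia.
Qed.

Hypothesis seed_pos : exists2 v, (v < n0)%N & (0 < d0 v)%N.

Lemma Wt_gt0 x : 0 < W x.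
Proof.
case: seed_pos => v v_lt dv_gt0.
have v_in : v \in iota 0 (nn x) by rewrite mem_iota add0n ltn_addr.
rewrite /Wt (bigD1_seq v v_in (iota_uniq _ _)) /= ltr_pwDl //.
  by apply: wt_gt0; rewrite /deg -addnA addn_gt0 dv_gt0.
by rewrite sumr_ge0 // => u _; apply: wt_ge0.
Qed.

Lemma Wt_neq0 x : W x != 0.
Proof. by rewrite gt_eqF // Wt_gt0. Qed.

Lemma expect_P3_cst x c : expect (P3 x) (fun=> c) = c.
Proof. by rewrite expect_ddraw -mulr_suml -mulr_suml divff ?Wt_neq0 ?mul1r. Qed.

Lemma expect_seqPolyPA_take n x j (psi : seq nat -> R) : (j <= size x)%N ->
  expect (seqPolyPA n x) (fun z => psi (take j z)) = psi (take j x).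
Proof.
elim: n x => [|n IH] x j_le /=; first exact: expect_dret.
rewrite expect_dbind -[RHS](expect_P3_cst x); apply: eq_expect => v.
by rewrite IH ?size_rcons ?leqW // -cats1 takel_cat.
Qed.

Lemma prob_seqPolyPA_rcons n x k hist h :
  (size x <= k < size x + n)%N -> size hist = k ->
  prob (seqPolyPA n x) (fun z => take k.+1 z == rcons hist h)
  = prob (P3 hist) (pred1 h) * prob (seqPolyPA n x) (fun z => take k z == hist).
Proof.
elim: n x => [|n IH] x /andP [x_le k_lt] size_hist; first by move: k_lt; lia.
rewrite !probE.
have [size_x|size_x] := eqVneq (size x) k.
  have take_x : take k x = x by rewrite -size_x take_size.
  have take_xv v : take k.+1 (rcons x v) = rcons x v.
    by rewrite take_oversize // size_rcons size_x.
  rewrite (expect_seqPolyPA_take _ (fun z => (z == hist)%:R)) ?size_x // take_x.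
  rewrite /= expect_dbind.
  under eq_expect => v.
    rewrite (expect_seqPolyPA_take _ (fun z => (z == rcons hist h)%:R))
      ?size_rcons ?size_x //.
    rewrite take_xv eqseq_rcons.
    over.
  have [->|_] := eqVneq x hist; first by rewrite mulr1; apply: eq_expect.
  by rewrite mulr0 -[RHS](expect_P3_cst x 0).
rewrite /= !expect_dbind -expectMl; apply: eq_expect => v.
rewrite -!probE IH // size_rcons.
by move: x_le k_lt size_x; lia.
Qed.

Hypothesis d0_out : forall v, (n0 <= v)%N -> d0 v = 0%N.

Lemma wt_out x v : valid_hist x -> (nn x <= v)%N -> w x v = 0.
Proof.
move=> x_valid v_ge.
have count_v : count (pred1 v) x = 0%N.
  apply/count_memPn/(nthP 0%N) => -[j j_lt x_j].
  have := x_valid j j_lt; rewrite x_j ltnNge => /negP; apply.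
  by rewrite (leq_trans _ v_ge) // leq_add2l ltnW.
have v_new : (n0 <= v < nn x)%N = false.
  by apply/negbTE; rewrite negb_and -leqNgt v_ge orbT.
rewrite /wt /deg count_v d0_out ?v_new ?powR0 ?gt_eqF //.
exact: leq_trans (leq_addr _ _) v_ge.
Qed.

Lemma prob_P3_pred1 x h : valid_hist x -> prob (P3 x) (pred1 h) = w x h / W x.
Proof.
move=> x_valid; rewrite prob_ddraw1; case: ltnP => // h_ge.
by rewrite wt_out ?mul0r.
Qed.

Lemma expect_P1_cat hs r g : valid_hist hs ->
  expect (P1 hs) g = \sum_(v <- iota 0 (nn (hs ++ r))) w hs v / W hs * g v.
Proof.
move=> hs_valid.
rewrite expect_ddraw {2}/nnodes size_cat addnA iotaD big_cat /=.
rewrite [X in _ = _ + X]big1_seq ?addr0 // => v /andP [_].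
by rewrite mem_iota => /andP [v_ge _]; rewrite wt_out ?mul0r.
Qed.

Lemma expect_batch_step G hs r :
  harmonic G -> valid_hist hs -> (size (hs ++ r) < N)%N ->
  W hs / Wb hs (size r) * expect (P1 hs) (fun v => G (rcons (hs ++ r) v))
  + (1 - W hs / Wb hs (size r)) * expect (phase3 hs r) G = G (hs ++ r).
Proof.
move=> G_harm hs_valid x_lt; rewrite (G_harm _ x_lt).
have [r0 | r_neq0] := eqVneq r [::].
  by rewrite r0 cats0 Wbound0 divff ?Wt_neq0 // subrr mul0r addr0 mul1r.
have size_r : (0 < size r)%N by rewrite lt0n size_eq0.
rewrite /phase3 expect_dbind expect_dcoin !expect_dbind.
set x := hs ++ r.
rewrite (expect_P1_cat r) //.
rewrite !(eq_expect _ (fun v => expect_dret (rcons x v) G)).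
rewrite !expect_ddraw !mulr_sumr -big_split mulr_sumr -big_split /=.
apply: eq_bigr => v _.
have Wb_gt := Wt_lt_Wbound hs size_r.
have /= mix := batch_mixture (w hs v) (w x v) (Wt_neq0 hs) (Wt_neq0 x)
  (lt0r_neq0 (lt_trans (Wt_gt0 hs) Wb_gt)) (negbT (gt_eqF Wb_gt))
  (negbT (gt_eqF (Wt_lt_cat hs r_neq0))).
by rewrite -[in RHS]mix; ring.
Qed.

Lemma expect_phase1 G hs m r :
  harmonic G -> valid_hist hs -> (size hs + size r + m = N)%N ->
  expect (phase1 alpha n0 d0 hs m (size r))
         (fun rb => expect (batch_end hs (r ++ rb.1) rb.2) G)
  = G (hs ++ r).
Proof.
move=> G_harm hs_valid; elim: m r => [|m IH] r size_N /=.
  by rewrite !expect_dret /= cats0.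
rewrite expect_dbind expect_dcoin expect_dret /= cats0 expect_dbind.
rewrite -[RHS](expect_batch_step G_harm hs_valid); last first.
  by rewrite size_cat; lia.
congr (_ * _ + _); apply: eq_expect => v.
rewrite expect_dbind rcons_cat -(IH (rcons r v)) ?size_rcons; last by lia.
by apply: eq_expect => rb; rewrite expect_dret /= cat_rcons.
Qed.

Lemma expect_batch G hs :
  harmonic G -> valid_hist hs -> (size hs < N)%N -> expect (batch hs) G = G hs.
Proof.
move=> G_harm hs_valid hs_lt.
rewrite batchE expect_dbind -(congr1 G (cats0 hs)).
rewrite -(expect_phase1 (m := N - size hs) (r := [::]) G_harm hs_valid) //=.
by rewrite addn0 subnKC // ltnW.
Qed.

Lemma expect_run g f hs :
  valid_hist hs -> (size hs <= N)%N -> (N - size hs <= f)%N ->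
  expect (run f hs) g = expect (seqPolyPA (N - size hs) hs) g.
Proof.
elim: f hs => [|f IH] hs hs_valid hs_le f_ge /=.
  by move: f_ge; rewrite leqn0 => /eqP ->; rewrite expect_dret.
case: leqP => [hs_ge|hs_lt].
  by move: hs_ge; rewrite -subn_eq0 => /eqP ->; rewrite expect_dret.
rewrite expect_dbind -(expect_batch (seqPolyPA_harmonic g) hs_valid hs_lt).
apply: eq_expect_supported.
apply: sub_supported (batch_supported hs_valid hs_lt) => x [x_valid x_size].
by apply: IH => //; lia.
Qed.

Lemma expect_ParPolyPA g :
  expect (ParPolyPA alpha n0 d0 N) g = expect (seqPolyPA N [::]) g.
Proof. by rewrite /ParPolyPA expect_run ?subn0. Qed.

End PolyPA.

Lemma seed_deg_out n0 (e : rel 'I_n0) v : (n0 <= v)%N -> seed_deg e v = 0%N.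
Proof.
move=> v_ge; apply/eqP; rewrite cards_eq0; apply/eqP/setP => u; rewrite !inE.
apply/negbTE/existsPn => x; rewrite ltn_eqF //.
exact: leq_trans (ltn_ord x) v_ge.
Qed.

Lemma seed_deg_gt0 n0 (e : rel 'I_n0) x y : e x y -> (0 < seed_deg e (val x))%N.
Proof.
move=> exy; apply/card_gt0P; exists y; rewrite inE.
by apply/existsP; exists x; rewrite eqxx.
Qed.

Theorem theorem4 (R : realType) (alpha : R) (n0 : nat) (e : rel 'I_n0)
    (N : nat) :
  0 < alpha ->
  symmetric e -> irreflexive e -> (exists x y : 'I_n0, e x y) ->
  let d0 := seed_deg e in
  let out := ParPolyPA alpha n0 d0 N in
  forall (i : nat) (hist : seq nat) (h : nat),
    (1 <= i <= N)%N -> size hist = i.-1 ->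
    0 < prob out (fun hs => take i.-1 hs == hist) ->
    prob out (fun hs => take i hs == rcons hist h)
      / prob out (fun hs => take i.-1 hs == hist)
    = wt alpha n0 d0 hist h / Wt alpha n0 d0 hist.
Proof.
move=> alpha_gt0 _ _ [x [y exy]] d0 out [//|k] hist h /andP [_ k_lt] /=.
move=> size_hist.
have d0_out := @seed_deg_out n0 e.
have seed_pos : exists2 v, (v < n0)%N & (0 < d0 v)%N.
  by exists (val x); [exact: ltn_ord | exact: seed_deg_gt0 exy].
have out_seq E : prob out E = prob (seqPolyPA alpha n0 d0 N [::]) E.
  by rewrite !probE (expect_ParPolyPA N alpha_gt0 seed_pos d0_out).
move=> prob_gt0; have [z z_out /eqP take_z] := prob_gt0P prob_gt0.
have hist_valid : valid_hist n0 hist.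
  have nil_valid : valid_hist n0 [::] by move=> j.
  by rewrite -take_z; exact: valid_hist_take (run_supported nil_valid z_out).
rewrite !out_seq (prob_seqPolyPA_rcons alpha_gt0 seed_pos) //.
by rewrite (prob_P3_pred1 alpha_gt0 d0_out) // mulfK // -out_seq gt_eqF.
Qed.
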